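(* Let $\phi:\mathbb{R}^{d}\to\mathbb{R}^{d}$ be a $C^{2}$ diffeomorphism, $x_{1}\in\mathbb{R}^{d}$, $v_{1}\in\mathbb{R}^{d}$ with $\|v_{1}\|=1$, and $x_{j}=\phi^{j-1}(x_{1})$. If $x_{1},\ldots,x_{D-1}$ are distinct, then the $(D-1)\times D_{\alpha}$ matrix $H(x_{1},v_{1})$ (defined in the context) has rank $D-1$, i.e. rank equal to its number of rows.
   Context: $\pi_{1}$ is the first coordinate projection, $\mathbf{e}_{1}=(1,0,\ldots,0)$. For a multi-index $\alpha\in\mathbb{Z}_{\geq0}^{d}$, $p_{\alpha}(x)=\prod_i(\pi_{i}x)^{\alpha_{i}}$; $\mathcal{I}_{2D-1}$ is the set of multi-indices with $|\alpha|\leq2D-1$, of cardinality $D_{\alpha}$. For $c=(c_{\alpha})\in\mathbb{R}^{D_{\alpha}}$, $\phi_{c}(x)=\phi(x)+\mathbf{e}_{1}\sum_{\alpha\in\mathcal{I}_{2D-1}}c_{\alpha}p_{\alpha}(x)$. The matrix $H(x_{1},v_{1})$ has row $j$ ($j=1,\ldots,D-1$) equal to the gradient with respect to $c$ at $c=0$ of $c\mapsto\pi_{1}\big(D(\phi_{c}^{j})(x_{1})\,v_{1}\big)$, where $D(\phi_c^j)(x_1)$ is the Jacobian matrix of $\phi_c^j$ at $x_1$. Equivalently, writing $F_{c}(x)=(\pi_{1}x,\pi_{1}\phi_{c}(x),\ldots,\pi_{1}\phi_{c}^{D-1}(x))$, one has $dF_{c}(x_{1})v_{1}=dF_{0}(x_{1})v_{1}+\binom{0}{H(x_{1},v_{1})}c+O(\|c\|^{2})$;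 e.g. the first row is $v_{1}^{T}\nabla p_{\alpha}(x_{1})$. *)

From HB Require Import structures.
From mathcomp Require Import all_boot all_order all_algebra.
From mathcomp Require Import all_classical all_reals all_analysis.
Set Implicit Arguments. Unset Strict Implicit. Unset Printing Implicit Defensive.
Import Order.TTheory GRing.Theory Num.Theory.
Import numFieldNormedType.Exports.
Local Open Scope ring_scope.

Section Defs.
Variables (R : realType) (d : nat).
Notation V := 'rV[R]_d.

(* first coordinate projection pi_1 (meaningful for d >= 1) *)
Definition pi1 (x : V) : R := \sum_(i < d | val i == 0%N) x 0 i.
Definition e1 : V := \row_(i < d) (val i == 0%N)%:R.

Definition sqnorm (v : V) : R := \sum_(i < d) v 0 i ^+ 2.

Definition C2 (f : V -> V) : Prop :=
  (forall x, differentiable f x) /\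
  (forall v x, differentiable ('D_v f) x) /\
  (forall v w, continuous ('D_w ('D_v f))).

Definition C2_diffeo (f : V -> V) : Prop :=
  C2 f /\ exists g : V -> V, cancel f g /\ cancel g f /\ C2 g.

Definition multi_index (D : nat) :=
  {a : {ffun 'I_d -> 'I_(2 * D)} | (\sum_(i < d) (a i : nat) <= (2 * D).-1)%N}.

Definition p_alpha D (a : multi_index D) (x : V) : R :=
  \prod_(i < d) x 0 i ^+ (val a i : nat).

Definition phi_c D (phi : V -> V) (c : multi_index D -> R) (x : V) : V :=
  phi x + (\sum_(a : multi_index D) c a * p_alpha a x) *: e1.

(* H(x1,v1): row j (j = 1..D-1, stored at index j-1) is the gradient in c at
   c = 0 of c |-> pi1 (D(phi_c^j)(x1) v1); entry (j, alpha) is the partial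
   derivative w.r.t. c_alpha at c = 0. *)
Definition Hmat D (phi : V -> V) (x1 v1 : V) : 'M[R]_(D.-1, #|{: multi_index D}|) :=
  \matrix_(j < D.-1, k < #|{: multi_index D}|)
    derive1 (fun t : R =>
      pi1 ('D_v1 (iter j.+1
                   (phi_c phi (fun a => if a == enum_val k then t else 0)))
                 x1)) 0.
End Defs.

From HB Require Import structures.
From mathcomp Require Import all_boot all_order all_algebra.
From mathcomp Require Import all_classical all_reals all_analysis.
From mathcomp Require Import zify.
Import Order.TTheory GRing.Theory Num.Theory.
Import numFieldNormedType.Exports.
Local Open Scope ring_scope.

(* Perturb phi in the direction q e1, where q is a combination of the
   monomials p_alpha.  Write y_k = phi^k x1 and u_k = D(phi^k)(x1) v1.  The
   derivatives at t = 0 of phi_t^k x1 and of D(phi_t^k)(x1) v1 obey a linear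
   recursion whose only inputs are q(y_k) and (D_{u_k} q)(y_k), so the column
   of H picked out by the coefficients of q is pi1 of the tangent variation,
   and it is linear in q.  If q vanishes to first order at y_0, ..., y_{m-1},
   the variation is zero up to step m and the tangent variation at step m + 1
   is (D_{u_m} q)(y_m) e1.  Take
     q_m = prod_{i<m} (x_{k_i} - (y_i)_{k_i})^2 (x_l - (y_m)_l),
   where k_i is a coordinate in which y_i and y_m differ (the orbit points are
   distinct) and u_m has a nonzero l-th coordinate (phi is a diffeomorphism
   and v1 != 0).  It has degree 2m + 1 <= 2D - 1, and the columns H c_m,
   m < D - 1, form a triangular matrix with nonzero diagonal. *)

(** * Derivatives along curves *)

Section CurveDerivative.
Context {R : realFieldType} {W : normedModType R}.

Lemma scaler_is_bilinear :
  bilinear_for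
    (GRing.Scale.Law.clone _ _ *:%R _) (GRing.Scale.Law.clone _ _ *:%R _)
    (@GRing.scale R W).
Proof.
split=> [u'|u] a x y /=.
- by rewrite scalerDl scalerA.
- by rewrite scalerDr scalerA mulrC -scalerA.
Qed.
HB.instance Definition _ := bilinear_isBilinear.Build R R W W _ _
  (@GRing.scale R W) scaler_is_bilinear.

Lemma is_derive1_comp_diff {U : normedModType R} {F : R -> U} {g : U -> W}
    {t : R} {dF} :
  is_derive t 1 F dF -> differentiable g (F t) ->
  is_derive t 1 (g \o F) ('d g (F t) dF).
Proof.
move=> [/derivable1_diffP dFt <-] dg.
have dgF : differentiable (g \o F) t by exact: differentiable_comp.
apply: DeriveDef; first exact/derivable1_diffP.
by rewrite !deriveE // diff_comp.
Qed.

Lemma is_derive1Z {s : R -> R} {F : R -> W} {t : R} {ds dF} :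
  is_derive t 1 s ds -> is_derive t 1 F dF ->
  is_derive t 1 (fun x => s x *: F x) (s t *: dF + ds *: F t).
Proof.
move=> [/derivable1_diffP dst <-] [/derivable1_diffP dFt <-].
have scale_cont : continuous (fun p : R * W => p.1 *: p.2).
  by move=> p; exact: scale_continuous.
have dpair : is_derive t 1 (fun x => (s x, F x)) ('D_1 s t, 'D_1 F t).
  apply: DeriveDef; first exact/derivable1_diffP/differentiable_pair.
  by rewrite deriveE ?diff_pair ?deriveE //; exact: differentiable_pair.
have := is_derive1_comp_diff dpair
  (differentiable_bilin (f := @GRing.scale R W) _ scale_cont).
by rewrite diff_bilin.
Qed.

Lemma is_derive_sum_seq {V : normedModType R} {I : Type} (r : seq I)
    {F : I -> V -> W} {x v} {dF : I -> W} :
  (forall i, is_derive x v (F i) (dF i)) ->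
  is_derive x v (fun y => \sum_(i <- r) F i y) (\sum_(i <- r) dF i).
Proof.
move=> dFi; elim: r => [|i r IH].
  have -> : (fun y => \sum_(i <- [::]) F i y) = cst 0.
    by apply/funext => y; rewrite big_nil.
  by rewrite big_nil; exact: is_derive_cst.
have -> : (fun y => \sum_(j <- i :: r) F j y) =
          F i + (fun y => \sum_(j <- r) F j y).
  by apply/funext => y; rewrite big_cons.
by rewrite big_cons; exact: is_deriveD.
Qed.

Lemma is_derive_coord {V : normedModType R} {m n} {M : V -> 'M[R]_(m, n)}
    {x v dM} i j :
  is_derive x v M dM -> is_derive x v (fun y => M y i j) (dM i j).
Proof.
move=> [dMx <-]; apply: DeriveDef; first exact: (derivable_mxP M x v).1 dMx i j.
by rewrite derive_mx // mxE.
Qed.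

Lemma derive_coord m n (x v : 'M[R]_(m, n)) i j :
  'D_v (fun y : 'M[R]_(m, n) => y i j) x = v i j.
Proof. by have [] := is_derive_coord i j (is_derive_id x v). Qed.

End CurveDerivative.

Section IterateDerivative.
Context {R : realFieldType} {V : normedModType R}.
Variable f : V -> V.
Hypothesis f_diff : forall x, differentiable f x.

Lemma differentiable_iter k x : differentiable (iter k f) x.
Proof.
elim: k x => [|k IH] x; first by have [] := is_diff_id x.
exact: differentiable_comp (IH x) (f_diff _).
Qed.

Lemma derive_iterS k x v :
  'D_v (iter k.+1 f) x = 'd f (iter k f x) ('D_v (iter k f) x).
Proof.
have -> : iter k.+1 f = f \o iter k f by [].
have dk := differentiable_iter k x.
rewrite deriveE; last exact: differentiable_comp dk (f_diff _).
by rewrite diff_comp // deriveE.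
Qed.

End IterateDerivative.

Lemma diff_rV_sum {R : realFieldType} {W : normedModType R} n
    (f : 'rV[R]_n -> W) y w :
  differentiable f y -> 'd f y w = \sum_i w 0 i *: 'D_('e_i) f y.
Proof.
move=> df; rewrite {1}(row_sum_delta w) linear_sum; apply: eq_bigr => i _.
by rewrite linearZ /= deriveE.
Qed.

Lemma is_derive1_diff_app {R : realFieldType} {W : normedModType R} {n}
    {f : 'rV[R]_n -> W} {Y U : R -> 'rV[R]_n} {t : R} {dY dU} :
  (forall y, differentiable f y) ->
  (forall i y, differentiable ('D_('e_i) f) y) ->
  is_derive t 1 Y dY -> is_derive t 1 U dU ->
  is_derive t 1 (fun s => 'd f (Y s) (U s))
    ('d f (Y t) dU + \sum_i U t 0 i *: 'd ('D_('e_i) f) (Y t) dY).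
Proof.
move=> df dDf dYt dUt.
have -> : (fun s => 'd f (Y s) (U s)) =
          (fun s => \sum_i U s 0 i *: 'D_('e_i) f (Y s)).
  by apply/funext => s; rewrite diff_rV_sum.
rewrite diff_rV_sum // -big_split /=; apply: is_derive_sum_seq => i.
rewrite addrC; apply: is_derive1Z (is_derive_coord 0 i dUt) _.
exact: is_derive1_comp_diff dYt (dDf i _).
Qed.

Lemma is_derive0_scale_id {R : realFieldType} {W : normedModType R}
    {g : R -> W} :
  differentiable g 0 -> is_derive (0 : R) 1 (fun t => t *: g t) (g 0).
Proof.
move=> /derivable1_diffP/derivableP dg.
have := is_derive1Z (is_derive_id (0 : R) 1) dg.
by rewrite scale0r add0r scale1r.
Qed.

Lemma diff_cancel_eq0 {R : realFieldType} {V W : normedModType R}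
    {f : V -> W} {g : W -> V} {x : V} (w : V) :
  cancel f g -> differentiable f x -> differentiable g (f x) ->
  'd f x w = 0 -> w = 0.
Proof.
move=> fK df dg fw0.
have gfE : g \o f = id by apply/funext => y; exact: fK.
have := congr1 (fun h => h w) (diff_comp df dg); rewrite gfE /= fw0.
by have [_ ->] := is_diff_id x; rewrite linear0.
Qed.

(** * Polynomial perturbations *)

Section Differentiable2.
Context {R : realType} {d : nat}.
Local Notation V := 'rV[R]_d.

Definition differentiable2 (q : V -> R) :=
  (forall x, differentiable q x) /\ (forall v x, differentiable ('D_v q) x).

Lemma differentiable2_cst c : differentiable2 (cst c).
Proof.
have Dc v : 'D_v (cst c) = cst 0 by apply/funext => x; rewrite derive_cst.
by split=> [x|v x]; rewrite ?Dc; exact: differentiable_cst.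
Qed.

Lemma differentiable2_coord i : differentiable2 (fun x : V => x 0 i).
Proof.
have Dcoord v : 'D_v (fun x : V => x 0 i) = cst (v 0 i).
  by apply/funext => x; rewrite derive_coord.
split=> [x|v x]; first exact: differentiable_coord.
by rewrite Dcoord; exact: differentiable_cst.
Qed.

Lemma differentiable2M f g :
  differentiable2 f -> differentiable2 g -> differentiable2 (f * g).
Proof.
move=> [df ddf] [dg ddg]; split=> [x|v x]; first exact: differentiableM.
have -> : 'D_v (f * g) = f * 'D_v g + g * 'D_v f.
  by apply/funext => y; rewrite deriveM //; exact: diff_derivable.
by apply: differentiableD; exact: differentiableM.
Qed.

Lemma differentiable2_prod (I : Type) (r : seq I) (F : I -> V -> R) :
  (forall i, differentiable2 (F i)) ->
  differentiable2 (fun x => \prod_(i <- r) F i x).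
Proof.
move=> dF; elim: r => [|i r IH].
  have -> : (fun x => \prod_(i <- [::]) F i x) = cst 1.
    by apply/funext => x; rewrite big_nil.
  exact: differentiable2_cst.
have -> : (fun x => \prod_(j <- i :: r) F j x) =
          F i * (fun x => \prod_(j <- r) F j x).
  by apply/funext => x; rewrite big_cons.
exact: differentiable2M.
Qed.

Lemma differentiable2X f n :
  differentiable2 f -> differentiable2 (fun x => f x ^+ n).
Proof.
move=> df; have -> : (fun x => f x ^+ n) = (fun x => \prod_(i < n) f x).
  by apply/funext => x; rewrite prodr_const card_ord.
exact: differentiable2_prod.
Qed.

Lemma differentiable2_monomial {D} (a : multi_index d D) :
  differentiable2 (p_alpha a).
Proof.
apply: differentiable2_prod => i.
exact/differentiable2X/differentiable2_coord.
Qed.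

End Differentiable2.

Section MonomialSpan.
Variables (R : realType) (d D : nat).
Local Notation V := 'rV[R]_d.
Local Notation MI := (multi_index d D).

Definition mdeg (a : MI) : nat := (\sum_i (val a i : nat))%N.

Definition monomial_comb (c : MI -> R) (x : V) : R := \sum_a c a * p_alpha a x.

Definition in_monomial_span n (f : V -> R) := exists c : MI -> R,
  (forall a, c a != 0 -> (mdeg a <= n)%N) /\ f =1 monomial_comb c.

Lemma in_monomial_span_le {n m f} :
  (n <= m)%N -> in_monomial_span n f -> in_monomial_span m f.
Proof.
move=> nm [c [c_deg fE]]; exists c; split => // a /c_deg deg_le.
exact: leq_trans deg_le nm.
Qed.

Lemma in_monomial_spanB {n f g} k :
  in_monomial_span n f -> in_monomial_span n g ->
  in_monomial_span n (fun x => f x - k * g x).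
Proof.
move=> [c [c_deg fE]] [c' [c'_deg gE]].
exists (fun a => c a - k * c' a); split.
  move=> a; have [ca0|/c_deg //] := eqVneq (c a) 0.
  by rewrite ca0 sub0r oppr_eq0 mulf_eq0 negb_or => /andP[_ /c'_deg].
move=> x; rewrite fE gE /monomial_comb mulr_sumr -sumrB; apply: eq_bigr => a _.
by rewrite mulrBl mulrA.
Qed.

Lemma in_monomial_span1 : (0 < D)%N -> in_monomial_span 0 (fun _ => 1).
Proof.
move=> D_gt0; have D2_gt0 : (0 < 2 * D)%N by rewrite muln_gt0.
pose f0 : {ffun 'I_d -> 'I_(2 * D)} := [ffun _ => Ordinal D2_gt0].
have f0_deg : (\sum_i (f0 i : nat) <= (2 * D).-1)%N.
  by rewrite big1 // => i _; rewrite ffunE.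
pose a0 : MI := exist _ f0 f0_deg.
exists (fun a => (a == a0)%:R); split.
  move=> a; have [->|] := eqVneq a a0; last by rewrite eqxx.
  by rewrite /mdeg big1 // => i _; rewrite /= ffunE.
move=> x; rewrite /monomial_comb (bigD1 a0) //= eqxx mul1r big1 ?addr0.
  by rewrite /p_alpha big1 // => i _; rewrite /= ffunE expr0.
by move=> a /negbTE ->; rewrite mul0r.
Qed.

(* [insubd] leaves [a] unchanged when the raised exponents leave [MI]; this
   never happens when [mdeg a < (2 * D).-1]. *)
Definition mshift (k : 'I_d) (a : MI) : MI :=
  insubd a [ffun i => insubd (val a i) (val a i + (i == k))%N].

Lemma sum_eq_ord (k : 'I_d) : (\sum_(i < d) (i == k) = 1)%N.
Proof. by rewrite (bigD1 k) //= eqxx big1 // => i /negbTE ->. Qed.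

Lemma mshiftE (k : 'I_d) (a : MI) : (mdeg a < (2 * D).-1)%N ->
  forall i, val (val (mshift k a) i) = (val a i + (i == k))%N.
Proof.
move=> a_deg i.
have lt_2D j : (val a j + (j == k) < 2 * D)%N.
  have : (val a j <= mdeg a)%N by rewrite /mdeg (bigD1 j) //= leq_addr.
  by have := leq_b1 (j == k); lia.
pose b : {ffun 'I_d -> 'I_(2 * D)} :=
  [ffun j => insubd (val a j) (val a j + (j == k))%N].
have bE j : val (b j) = (val a j + (j == k))%N.
  by rewrite ffunE val_insubd lt_2D.
have b_deg : (\sum_j (b j : nat) <= (2 * D).-1)%N.
  under eq_bigr do rewrite bE.
  by rewrite big_split /= sum_eq_ord addn1.
by rewrite -bE /mshift val_insubd -/b b_deg.
Qed.

Lemma mdeg_mshift (k : 'I_d) (a : MI) : (mdeg a < (2 * D).-1)%N ->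
  mdeg (mshift k a) = (mdeg a).+1.
Proof.
move=> a_deg; rewrite /mdeg; under eq_bigr do rewrite mshiftE //.
by rewrite big_split /= sum_eq_ord addn1.
Qed.

Lemma p_alpha_mshift (k : 'I_d) (a : MI) (x : V) : (mdeg a < (2 * D).-1)%N ->
  p_alpha (mshift k a) x = p_alpha a x * x 0 k.
Proof.
move=> a_deg; rewrite /p_alpha; under eq_bigr do rewrite mshiftE // exprD.
rewrite big_split /=; congr (_ * _).
rewrite (bigD1 k) //= eqxx expr1 big1 ?mulr1 // => i /negbTE ->.
by rewrite expr0.
Qed.

Lemma in_monomial_spanM_coord {n f} (k : 'I_d) : (n < (2 * D).-1)%N ->
  in_monomial_span n f -> in_monomial_span n.+1 (fun x => f x * x 0 k).
Proof.
move=> n_lt [c [c_deg fE]].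
exists (fun b => \sum_(a | mshift k a == b) c a); split.
  move=> b; have [a /andP[/eqP <- /c_deg a_deg] _|c0] :=
    pickP (fun a => (mshift k a == b) && (c a != 0)).
    by rewrite mdeg_mshift ?ltnS //; exact: leq_ltn_trans a_deg n_lt.
  rewrite big1 ?eqxx // => a /eqP ab.
  by have := c0 a; rewrite ab eqxx /= => /negbFE/eqP.
move=> x; rewrite fE /monomial_comb mulr_suml.
rewrite (partition_big (mshift k) xpredT) //=.
apply: eq_bigr => b _; rewrite mulr_suml; apply: eq_bigr => a /eqP <-.
have [->|/c_deg a_deg] := eqVneq (c a) 0; first by rewrite !mul0r.
by rewrite p_alpha_mshift ?mulrA //; exact: leq_ltn_trans a_deg n_lt.
Qed.

Lemma in_monomial_spanM_affine {n f} (k : 'I_d) y : (n < (2 * D).-1)%N ->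
  in_monomial_span n f -> in_monomial_span n.+1 (fun x => f x * (x 0 k - y)).
Proof.
move=> n_lt f_span.
have [c [c_deg fE]] := in_monomial_spanB y
  (in_monomial_spanM_coord k n_lt f_span)
  (in_monomial_span_le (leqnSn n) f_span).
by exists c; split => // x; rewrite -fE mulrBr [y * _]mulrC.
Qed.

End MonomialSpan.
Arguments monomial_comb {R d D}.
Arguments in_monomial_spanM_affine {R d D n f}.

(** * Bump polynomials *)

Section Bump.
Variables (R : realType) (d D : nat).
Local Notation V := 'rV[R]_d.

Definition flat (f : V -> R) (y : V) := f y = 0 /\ forall v, 'D_v f y = 0.

Lemma flatMl (f g : V -> R) y : differentiable f y -> differentiable g y ->
  flat f y -> flat (f * g) y.
Proof.
move=> df dg [f0 Df0]; split=> [|v].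
  by rewrite -[(f * g) y]/(f y * g y) f0 mul0r.
by rewrite deriveM ?f0 ?Df0 ?scale0r ?scaler0 ?addr0 //; exact: diff_derivable.
Qed.

Lemma flatMr (f g : V -> R) y : differentiable f y -> differentiable g y ->
  flat g y -> flat (f * g) y.
Proof.
move=> df dg [g0 Dg0]; split=> [|v].
  by rewrite -[(f * g) y]/(f y * g y) g0 mulr0.
by rewrite deriveM ?g0 ?Dg0 ?scale0r ?scaler0 ?addr0 //; exact: diff_derivable.
Qed.

Lemma flat_sqr (f : V -> R) y :
  differentiable f y -> f y = 0 -> flat (f * f) y.
Proof.
move=> df f0; split=> [|v]; first by rewrite -[(f * f) y]/(f y * f y) f0 mul0r.
by rewrite deriveM ?f0 ?scale0r ?addr0 //; exact: diff_derivable.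
Qed.

Lemma is_derive_coordB (k : 'I_d) (c : R) y v :
  is_derive y v (fun x : V => x 0 k - c) (v 0 k).
Proof.
have := is_deriveB (is_derive_coord 0 k (is_derive_id y v))
  (is_derive_cst c y v).
by rewrite subr0.
Qed.

Lemma differentiable_coordB (k : 'I_d) (c : R) y :
  differentiable (fun x : V => x 0 k - c) y.
Proof.
have -> : (fun x : V => x 0 k - c) = (fun x : V => x 0 k) - cst c by [].
by apply: differentiableB => //; exact: differentiable_coord.
Qed.

Section Construction.
Variables (ys : nat -> V) (m : nat) (sep : nat -> 'I_d) (l : 'I_d).

Definition sep_factor i (x : V) : R := x 0 (sep i) - ys i 0 (sep i).
Definition bump_base n (x : V) : R :=
  \prod_(i < n) (sep_factor i x * sep_factor i x).
Definition bump (x : V) : R := bump_base m x * (x 0 l - ys m 0 l).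

Lemma differentiable_sep_factor i y : differentiable (sep_factor i) y.
Proof. exact: differentiable_coordB. Qed.

Lemma bump_baseS n :
  bump_base n.+1 = bump_base n * (sep_factor n * sep_factor n).
Proof. by apply/funext => x; rewrite /bump_base big_ord_recr. Qed.

Lemma differentiable_bump_base n y : differentiable (bump_base n) y.
Proof.
elim: n => [|n IH]; last first.
  by rewrite bump_baseS; apply: differentiableM => //;
     apply: differentiableM; exact: differentiable_sep_factor.
have -> : bump_base 0 = cst 1 by apply/funext => x; rewrite /bump_base big_ord0.
exact: differentiable_cst.
Qed.

Lemma flat_bump_base {n k} : (k < n)%N -> flat (bump_base n) (ys k).
Proof.
have dsep2 i : differentiable (sep_factor i * sep_factor i) (ys k).
  by apply: differentiableM; exact: differentiable_sep_factor.
elim: n => [//|n IH] k_lt; rewrite bump_baseS.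
have [k_lt_n|] := ltnP k n.
  exact: flatMl (differentiable_bump_base _ _) (dsep2 n) (IH k_lt_n).
move=> n_le_k; have -> : n = k by apply/eqP; rewrite eqn_leq n_le_k -ltnS k_lt.
apply: flatMr (differentiable_bump_base _ _) (dsep2 k) _.
apply: flat_sqr; first exact: differentiable_sep_factor.
by rewrite /sep_factor subrr.
Qed.

Lemma bump_base_neq0 n :
  (forall i, (i < m)%N -> ys i 0 (sep i) != ys m 0 (sep i)) ->
  (n <= m)%N -> bump_base n (ys m) != 0.
Proof.
move=> sep_neq; elim: n => [|n IH] n_le.
  by rewrite /bump_base big_ord0 oner_neq0.
have sep_n : sep_factor n (ys m) != 0.
  by rewrite /sep_factor subr_eq0 eq_sym sep_neq.
by rewrite bump_baseS /= !mulf_neq0 ?IH ?(ltnW n_le).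
Qed.

Lemma flat_bump k : (k < m)%N -> flat bump (ys k).
Proof.
move=> k_lt; rewrite -[bump]/(bump_base m * (fun x => x 0 l - ys m 0 l)).
apply: flatMl (differentiable_bump_base _ _) _ (flat_bump_base k_lt).
exact: differentiable_coordB.
Qed.

Lemma derive_bump_neq0 (u : V) :
  (forall i, (i < m)%N -> ys i 0 (sep i) != ys m 0 (sep i)) -> u 0 l != 0 ->
  'D_u bump (ys m) != 0.
Proof.
move=> sep_neq ul_neq0.
have [der_lin Dlin] := is_derive_coordB l (ys m 0 l) (ys m) u.
have der_base : derivable (bump_base m) (ys m) u.
  exact/diff_derivable/differentiable_bump_base.
rewrite -[bump]/(bump_base m * (fun x => x 0 l - ys m 0 l)) deriveM // Dlin.
by rewrite subrr scale0r addr0 mulf_neq0 ?bump_base_neq0.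
Qed.

Lemma in_monomial_span_bump_base n :
  (n < D)%N -> in_monomial_span R d D (2 * n) (bump_base n).
Proof.
elim: n => [|n IH] n_lt.
  have -> : bump_base 0 = fun=> 1.
    by apply/funext => x; rewrite /bump_base big_ord0.
  exact: in_monomial_span1.
have -> : bump_base n.+1 =
          (fun x => bump_base n x * sep_factor n x * sep_factor n x).
  by apply/funext => x; rewrite bump_baseS /= mulrA.
rewrite (_ : 2 * n.+1 = (2 * n).+2)%N; last lia.
apply: in_monomial_spanM_affine; first lia.
apply: in_monomial_spanM_affine; first lia.
exact/IH/ltnW.
Qed.

Lemma in_monomial_span_bump :
  (m < D)%N -> in_monomial_span R d D (2 * m).+1 bump.
Proof.
move=> m_lt.
by apply: in_monomial_spanM_affine (in_monomial_span_bump_base _ m_lt); lia.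
Qed.

End Construction.
End Bump.
Arguments flat {R d}.
Arguments bump {R d}.

Lemma exists_coord_neq {T : eqType} {n} {x y : 'rV[T]_n} :
  x != y -> exists k, x 0 k != y 0 k.
Proof.
move=> x_neq_y; apply/existsP; rewrite -negb_forall.
by apply: contra x_neq_y => /forallP xy_eq; apply/eqP/rowP => k; apply/eqP.
Qed.

Lemma exists_monomial_bump (R : realType) d D (ys : nat -> 'rV[R]_d) m
    (u : 'rV[R]_d) :
  (m < D)%N -> (forall i, (i < m)%N -> ys i != ys m) -> u != 0 ->
  exists c : multi_index d D -> R,
    (forall i, (i < m)%N -> flat (monomial_comb c) (ys i)) /\
    'D_u (monomial_comb c) (ys m) != 0.
Proof.
move=> m_lt ys_neq u_neq0.
have [l ul_neq0] : exists l, u 0 l != 0.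
  by have [l] := exists_coord_neq u_neq0; rewrite mxE; exists l.
have sep_ex i : exists k, (i < m)%N -> ys i 0 k != ys m 0 k.
  have [/ys_neq /exists_coord_neq [k] | _] := ltnP i m; last by exists l.
  by exists k.
have [sep sep_neq] := boolp.choice sep_ex.
have [c [_ bumpE]] : in_monomial_span R d D (2 * m).+1 (bump ys m sep l).
  exact: in_monomial_span_bump.
exists c; have <- : bump ys m sep l = monomial_comb c by apply/funext.
by split; [exact: flat_bump | exact: derive_bump_neq0].
Qed.

Lemma derive_monomial_comb (R : realType) d D (c : multi_index d D -> R) y v :
  'D_v (monomial_comb c) y = \sum_a c a * 'D_v (p_alpha a) y.
Proof.
have dp a : is_derive y v (c a *: p_alpha a) (c a *: 'D_v (p_alpha a) y).
  exact/is_deriveZ/derivableP/diff_derivable/(differentiable2_monomial a).1.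
by have [_ ->] := is_derive_sum_seq (index_enum _) dp.
Qed.

(** * Variation of the perturbed orbit *)

Section Variation.
Context {R : realType} {d : nat}.
Local Notation V := 'rV[R]_d.
Local Notation e1 := (e1 R d).
Variables (phi : V -> V) (x1 v1 : V).
Hypothesis phi_diff : forall x, differentiable phi x.
Hypothesis Dphi_diff : forall i x, differentiable ('D_('e_i) phi) x.

Definition perturb (q : V -> R) (t : R) (x : V) : V := phi x + (t * q x) *: e1.

Definition orbit k := iter k phi x1.
Definition tangent k := 'D_v1 (iter k phi) x1.

Definition pos_forcing (q : V -> R) k := q (orbit k).
Definition tan_forcing (q : V -> R) k := 'D_(tangent k) q (orbit k).

(* The sum is D^2 phi(y_k)(u_k, dy_k), expanded in the coordinates of u_k. *)
Fixpoint variation (a b : nat -> R) k : V * V :=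
  if k is k.+1 then
    ('d phi (orbit k) (variation a b k).1 + a k *: e1,
     'd phi (orbit k) (variation a b k).2
       + \sum_i tangent k 0 i *: 'd ('D_('e_i) phi) (orbit k) (variation a b k).1
       + b k *: e1)
  else (0, 0).

Lemma perturb0 q : perturb q 0 = phi.
Proof. by apply/funext => x; rewrite /perturb mul0r scale0r addr0. Qed.

Lemma diff_perturb {q : V -> R} (t : R) {x : V} : differentiable q x ->
  differentiable (perturb q t) x /\
  forall w, 'd (perturb q t) x w = 'd phi x w + (t * 'd q x w) *: e1.
Proof.
move=> dq; have dtq : differentiable (t *: q) x by exact: differentiableZ.
have dterm : differentiable (fun y => (t *: q) y *: e1) x.
  exact: differentiableZl.
have -> : perturb q t = phi + (fun y => (t *: q) y *: e1) by [].
split=> [|w]; first exact: differentiableD.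
have hD := congr1 (fun f => f w) (diffD (phi_diff x) dterm).
have hZl := congr1 (fun f => f w) (diffZl e1 dtq).
have hZ := congr1 (fun f => f w) (diffZ t dq).
rewrite [LHS]hD /=; rewrite /= in hZl hZ.
by rewrite [X in _ + X = _]hZl [X in X *: _]hZ.
Qed.

Lemma is_derive_perturb_orbit {q : V -> R} {Y : R -> V} {dY} :
  differentiable2 q -> is_derive (0 : R) 1 Y dY ->
  is_derive (0 : R) 1 (fun t => perturb q t (Y t))
    ('d phi (Y 0) dY + q (Y 0) *: e1).
Proof.
move=> [dq _] dYt.
have [/derivable1_diffP dqY _] := is_derive1_comp_diff dYt (dq (Y 0)).
have -> : (fun t => perturb q t (Y t)) =
          (phi \o Y) + (fun t => t *: ((q \o Y) t *: e1)).
  by apply/funext => t; rewrite /perturb -scalerA.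
exact: is_deriveD (is_derive1_comp_diff dYt (phi_diff _))
  (is_derive0_scale_id (differentiableZl e1 dqY)).
Qed.

Lemma is_derive_perturb_tangent {q : V -> R} {Y U : R -> V} {dY dU} :
  differentiable2 q -> is_derive (0 : R) 1 Y dY -> is_derive (0 : R) 1 U dU ->
  is_derive (0 : R) 1 (fun t => 'd (perturb q t) (Y t) (U t))
    ('d phi (Y 0) dU + \sum_i U 0 0 i *: 'd ('D_('e_i) phi) (Y 0) dY
     + 'D_(U 0) q (Y 0) *: e1).
Proof.
move=> [dq dDq] dYt dUt.
have [/derivable1_diffP dqYU _] :=
  is_derive1_diff_app dq (fun i => dDq 'e_i) dYt dUt.
have -> : (fun t => 'd (perturb q t) (Y t) (U t)) =
    (fun t => 'd phi (Y t) (U t)) + (fun t => t *: ('d q (Y t) (U t) *: e1)).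
  by apply/funext => t; rewrite [LHS](diff_perturb t (dq (Y t))).2 -scalerA.
rewrite (deriveE (U 0) (dq (Y 0))).
exact: is_deriveD (is_derive1_diff_app phi_diff Dphi_diff dYt dUt)
  (is_derive0_scale_id (differentiableZl e1 dqYU)).
Qed.

Lemma variation_is_derive {q : V -> R} : differentiable2 q -> forall k,
  is_derive (0 : R) 1 (fun t => iter k (perturb q t) x1)
    (variation (pos_forcing q) (tan_forcing q) k).1 /\
  is_derive (0 : R) 1 (fun t => 'D_v1 (iter k (perturb q t)) x1)
    (variation (pos_forcing q) (tan_forcing q) k).2.
Proof.
move=> q2; have [dq _] := q2; elim=> [|k [dY dU]].
  split; first exact: is_derive_cst.
  have -> : (fun t => 'D_v1 (iter 0 (perturb q t)) x1) = cst v1.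
    by apply/funext => t; rewrite derive_id.
  exact: is_derive_cst.
split.
  have := is_derive_perturb_orbit q2 dY.
  by rewrite perturb0.
have -> : (fun t => 'D_v1 (iter k.+1 (perturb q t)) x1) =
    (fun t => 'd (perturb q t) (iter k (perturb q t) x1)
                ('D_v1 (iter k (perturb q t)) x1)).
  apply/funext => t; apply: derive_iterS => x.
  exact: (diff_perturb t (dq x)).1.
have := is_derive_perturb_tangent q2 dY dU.
by rewrite !perturb0.
Qed.

Lemma variation_sum {I : finType} (c : I -> R) (a b : I -> nat -> R) k :
  (variation (fun k => \sum_i c i * a i k) (fun k => \sum_i c i * b i k) k).1
    = \sum_i c i *: (variation (a i) (b i) k).1 /\
  (variation (fun k => \sum_i c i * a i k) (fun k => \sum_i c i * b i k) k).2
    = \sum_i c i *: (variation (a i) (b i) k).2.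
Proof.
elim: k => [|k [IH1 IH2]].
  by split; rewrite /= big1 // => i _; rewrite scaler0.
split.
  rewrite /= IH1 linear_sum scaler_suml -big_split /=.
  by apply: eq_bigr => i _; rewrite linearZ /= scalerDr scalerA.
rewrite /= IH1 IH2.
under [RHS]eq_bigr do rewrite !scalerDr.
rewrite !big_split /=; congr (_ + _ + _).
- by rewrite linear_sum; apply: eq_bigr => i _; rewrite linearZ.
- under [RHS]eq_bigr do rewrite scaler_sumr.
  rewrite [RHS]exchange_big /=; apply: eq_bigr => j _.
  rewrite linear_sum scaler_sumr; apply: eq_bigr => i _.
  by rewrite linearZ /= !scalerA mulrC.
- by rewrite scaler_suml; apply: eq_bigr => i _; rewrite scalerA.
Qed.

Lemma variation_eq0 a b n : (forall k, (k < n)%N -> a k = 0 /\ b k = 0) ->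
  variation a b n = (0, 0).
Proof.
elim: n => [//|n IH] ab0.
rewrite [variation a b n.+1]/= IH => [|k k_lt]; last exact/ab0/ltnW.
have [-> ->] := ab0 n (ltnSn n); congr (_, _); rewrite scale0r addr0.
  exact: linear0.
rewrite big1 => [|i _]; first by rewrite addr0; exact: linear0.
by rewrite (_ : 'd ('D_('e_i) phi) (orbit n) 0 = 0) ?scaler0 //; exact: linear0.
Qed.

Lemma variation_first a b n : (forall k, (k < n)%N -> a k = 0 /\ b k = 0) ->
  (variation a b n.+1).2 = b n *: e1.
Proof.
move=> ab0; rewrite [variation a b n.+1]/= variation_eq0 //; cbn [fst snd].
rewrite big1 => [|i _]; last first.
  by rewrite (_ : 'd ('D_('e_i) phi) (orbit n) 0 = 0) ?scaler0 //; exact: linear0.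
by rewrite addr0 (_ : 'd phi (orbit n) 0 = 0) ?add0r //; exact: linear0.
Qed.

Definition response q := variation (pos_forcing q) (tan_forcing q).

Lemma response_monomial_comb D (c : multi_index d D -> R) k :
  (response (monomial_comb c) k).2 = \sum_a c a *: (response (p_alpha a) k).2.
Proof.
rewrite /response.
have -> : pos_forcing (monomial_comb c) =
          (fun k => \sum_a c a * pos_forcing (p_alpha a) k) by [].
have -> : tan_forcing (monomial_comb c) =
          (fun k => \sum_a c a * tan_forcing (p_alpha a) k).
  by apply/funext => k'; rewrite /tan_forcing derive_monomial_comb.
exact: (variation_sum c (fun a => pos_forcing (p_alpha a))
                        (fun a => tan_forcing (p_alpha a)) k).2.
Qed.

Lemma tangentS k : tangent k.+1 = 'd phi (orbit k) (tangent k).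
Proof. exact: derive_iterS. Qed.

Lemma tangent_neq0 : (forall x w, 'd phi x w = 0 -> w = 0) -> v1 != 0 ->
  forall k, tangent k != 0.
Proof.
move=> ker0 v1_neq0; elim=> [|k IH]; first by rewrite /tangent derive_id.
by rewrite tangentS; apply: contra IH => /eqP /ker0 ->.
Qed.

End Variation.

(** * The rank of H *)

Lemma mxrank_trig_mulmx {F : fieldType} {n p}
    (H : 'M[F]_(n, p)) (B : 'M[F]_(p, n)) :
  is_trig_mx (H *m B) -> (forall i, (H *m B) i i != 0) -> \rank H = n.
Proof.
move=> HB_trig HB_diag; have HB_unit : H *m B \in unitmx.
  by rewrite unitmxE unitfE det_trig //; apply/prodf_neq0 => i _.
apply/eqP; rewrite eqn_leq rank_leq_row /=.
by rewrite -{1}(mxrank_unit HB_unit) mxrankM_maxl.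
Qed.

Lemma sum_enum_val {T : finType} {M : nmodType} (F : T -> M) :
  \sum_(k < #|{: T}|) F (enum_val k) = \sum_a F a.
Proof. by rewrite -big_enum_val; apply: eq_bigl => a; rewrite inE. Qed.

Lemma pi1E {R : realType} {d} (d_gt0 : (0 < d)%N) (v : 'rV[R]_d) :
  pi1 v = v 0 (Ordinal d_gt0).
Proof.
by rewrite /pi1 (big_pred1 (Ordinal d_gt0)) // => i; rewrite -val_eqE.
Qed.

Section HmatRank.
Variables (R : realType) (d D : nat).
Local Notation V := 'rV[R]_d.
Local Notation MI := (multi_index d D).
Variables (phi : V -> V) (x1 v1 : V).
Hypothesis d_gt0 : (0 < d)%N.
Hypothesis phi_diff : forall x, differentiable phi x.
Hypothesis Dphi_diff : forall i x, differentiable ('D_('e_i) phi) x.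
Local Notation response := (response phi x1 v1).

Lemma phi_c_indicator (al : MI) t :
  phi_c phi (fun a => if a == al then t else 0) = perturb phi (p_alpha al) t.
Proof.
apply/funext => x; rewrite /phi_c /perturb (bigD1 al) //= eqxx big1 ?addr0 //.
by move=> a /negbTE ->; rewrite mul0r.
Qed.

Lemma Hmat_entry j k :
  Hmat D phi x1 v1 j k = pi1 (response (p_alpha (enum_val k)) j.+1).2.
Proof.
rewrite mxE; under eq_fun do rewrite phi_c_indicator (pi1E d_gt0).
have [_ dU] := variation_is_derive _ x1 v1 phi_diff Dphi_diff
  (differentiable2_monomial (enum_val k)) j.+1.
rewrite derive1E (pi1E d_gt0).
by have [_ ->] := is_derive_coord 0 (Ordinal d_gt0) dU.
Qed.

Lemma Hmat_mul_comb (c : 'I_D.-1 -> MI -> R) j m :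
  (Hmat D phi x1 v1 *m \matrix_(k, m) c m (enum_val k)) j m =
  pi1 (response (monomial_comb (c m)) j.+1).2.
Proof.
rewrite mxE response_monomial_comb (pi1E d_gt0) summxE -sum_enum_val.
by apply: eq_bigr => k _; rewrite Hmat_entry (pi1E d_gt0) !mxE mulrC.
Qed.

Lemma rank_Hmat : (forall x w, 'd phi x w = 0 -> w = 0) -> v1 != 0 ->
  (forall i j : 'I_D.-1, iter i phi x1 = iter j phi x1 -> i = j) ->
  \rank (Hmat D phi x1 v1) = D.-1.
Proof.
move=> ker0 v1_neq0 orbit_inj.
have bump_ex (m : 'I_D.-1) : exists c : MI -> R,
    (forall i, (i < m)%N -> flat (monomial_comb c) (orbit phi x1 i)) /\
    'D_(tangent phi x1 v1 m) (monomial_comb c) (orbit phi x1 m) != 0.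
  apply: exists_monomial_bump; last exact: tangent_neq0.
    by have := ltn_ord m; lia.
  move=> i i_lt; apply/eqP => orbit_eq.
  have := orbit_inj (Ordinal (ltn_trans i_lt (ltn_ord m))) m orbit_eq.
  by move=> /(congr1 val) /= i_eq; rewrite i_eq ltnn in i_lt.
have [c cP] := boolp.choice bump_ex.
have forcing0 (m : 'I_D.-1) k : (k < m)%N ->
    pos_forcing phi x1 (monomial_comb (c m)) k = 0 /\
    tan_forcing phi x1 v1 (monomial_comb (c m)) k = 0.
  by move=> /(cP m).1 [q0 Dq0]; split; [exact: q0 | exact: Dq0].
apply: (mxrank_trig_mulmx _ (\matrix_(k, m) c m (enum_val k))) => [|m].
  apply/forallP => j; apply/forallP => m; apply/implyP => jm; apply/eqP.
  rewrite Hmat_mul_comb /response variation_eq0 => [|k kj].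
    by rewrite (pi1E d_gt0) mxE.
  exact/forcing0/(leq_trans kj).
rewrite Hmat_mul_comb /response variation_first; last exact: forcing0.
by rewrite (pi1E d_gt0) !mxE eqxx mulr1; exact: (cP m).2.
Qed.

End HmatRank.

Theorem lemma12 (R : realType) (d D : nat) (phi : 'rV[R]_d -> 'rV[R]_d)
    (x1 v1 : 'rV[R]_d) :
  (0 < d)%N ->
  C2_diffeo phi ->
  sqnorm v1 = 1 ->
  (forall i j : 'I_D.-1, iter i phi x1 = iter j phi x1 -> i = j) ->
  \rank (Hmat D phi x1 v1) = D.-1.
Proof.
move=> d_gt0 [[phi_diff [Dphi_diff _]] [g [phiK [_ [g_diff _]]]]] v1_norm.
have v1_neq0 : v1 != 0.
  apply/eqP => v1_eq0; move: v1_norm.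
  rewrite v1_eq0 /sqnorm big1 => [/eqP|i _].
    by rewrite eq_sym oner_eq0.
  by rewrite mxE expr0n.
apply: rank_Hmat => // x w.
exact: diff_cancel_eq0 phiK (phi_diff x) (g_diff _).
Qed.
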